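(* Let $\mathfrak g=\mathbb R f_1\ltimes_M\mathfrak u$ be a real almost abelian Lie algebra, where $\mathfrak u$ is an abelian ideal of codimension one and $M=\operatorname{ad}_{f_1}|_{\mathfrak u}$, endowed with an LCS structure $(\omega,\theta)$. If $M$ is invertible, then the LCS structure is of the second kind.
   Context: An LCS structure on $\mathfrak g$ is a pair $(\omega,\theta)$ with $\omega\in\Lambda^2\mathfrak g^*$ non-degenerate and $\theta\in\mathfrak g^*$ closed and nonzero, such that $d\omega=\theta\wedge\omega$. Let $\mathfrak g_\omega=\{x\in\mathfrak g:\ \omega([x,y],z)+\omega(y,[x,z])=0\ \text{for all }y,z\in\mathfrak g\}$. The LCS structure is of the first kind if $\theta|_{\mathfrak g_\omega}$ is surjective onto $\mathbb R$, and of the second kind if $\theta|_{\mathfrak g_\omega}\equiv0$. *)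

From HB Require Import structures.
From mathcomp Require Import all_boot all_order all_algebra.
From mathcomp Require Import reals.
Set Implicit Arguments. Unset Strict Implicit. Unset Printing Implicit Defensive.
Import Order.TTheory GRing.Theory Num.Theory.
Local Open Scope ring_scope.

(* The almost abelian Lie algebra g = R f_1 |x_M u, with u = R^n (column
   vectors) an abelian ideal.  An element a f_1 + u is the pair (a, u). *)
Definition alg (R : realType) (n : nat) : Type := (R * 'cV[R]_n)%type.

Section AlmostAbelian.
Variables (R : realType) (n : nat).

Definition gzero : alg R n := (0, 0).
Definition gadd (x y : alg R n) : alg R n := (x.1 + y.1, x.2 + y.2).
Definition gscale (c : R) (x : alg R n) : alg R n := (c * x.1, c *: x.2).

(* [a f_1 + u, b f_1 + v] = a M v - b M u ; so ad_{f_1}|_u = M, [u,u] = 0. *)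
Definition gbracket (M : 'M[R]_n) (x y : alg R n) : alg R n :=
  (0, x.1 *: (M *m y.2) - y.1 *: (M *m x.2)).

Definition is_linear_form (t : alg R n -> R) : Prop :=
  (forall x y, t (gadd x y) = t x + t y) /\
  (forall c x, t (gscale c x) = c * t x).

Definition is_2form (w : alg R n -> alg R n -> R) : Prop :=
  (forall x, is_linear_form (w x)) /\
  (forall y, is_linear_form (fun x => w x y)) /\
  (forall x, w x x = 0).

Definition nondegenerate (w : alg R n -> alg R n -> R) : Prop :=
  forall x, (forall y, w x y = 0) -> x = gzero.

Definition closed_1form (M : 'M[R]_n) (t : alg R n -> R) : Prop :=
  forall x y, t (gbracket M x y) = 0.

Definition d2 (M : 'M[R]_n) (w : alg R n -> alg R n -> R) (x y z : alg R n) : R :=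
  - (w (gbracket M x y) z + w (gbracket M y z) x + w (gbracket M z x) y).

Definition wedge12 (t : alg R n -> R) (w : alg R n -> alg R n -> R)
    (x y z : alg R n) : R :=
  t x * w y z + t y * w z x + t z * w x y.

Definition is_LCS (M : 'M[R]_n) (w : alg R n -> alg R n -> R) (t : alg R n -> R)
  : Prop :=
  is_2form w /\ nondegenerate w /\ is_linear_form t /\ closed_1form M t /\
  (exists x, t x <> 0) /\
  (forall x y z, d2 M w x y z = wedge12 t w x y z).

Definition g_omega (M : 'M[R]_n) (w : alg R n -> alg R n -> R) (x : alg R n)
  : Prop :=
  forall y z, w (gbracket M x y) z + w y (gbracket M x z) = 0.

Definition second_kind (M : 'M[R]_n) (w : alg R n -> alg R n -> R)
    (t : alg R n -> R) : Prop :=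
  forall x, g_omega M w x -> t x = 0.

End AlmostAbelian.

From HB Require Import structures.
From mathcomp Require Import all_boot all_order all_algebra.
From mathcomp Require Import reals.
Set Implicit Arguments. Unset Strict Implicit. Unset Printing Implicit Defensive.
Import GRing.Theory Num.Theory.
Local Open Scope ring_scope.

(* Since M is invertible, [f_1, u] = u, so the closed form theta vanishes on u
   and theta(f_1) <> 0; it therefore suffices to show that g_omega lies in u.
   Suppose x = a f_1 + u0 lies in g_omega with a <> 0.  Evaluating
   d omega = theta /\ omega on (f_1, v, v') gives
   theta(f_1) omega(v, v') = - (omega(Mv, v') + omega(v, Mv')), and the right
   hand side is killed by x in g_omega, so u is omega-isotropic.  Then
   x in g_omega, tested on (f_1, v), gives a omega(f_1, Mv) = 0, so f_1 lies in
   the kernel of omega, contradicting non-degeneracy. *)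

Section AlmostAbelianLCS.
Variables (R : realType) (n : nat).
Implicit Types (a b : R) (u v : 'cV[R]_n) (t : alg R n -> R).

Definition f1 : alg R n := (1, 0).

Section LinearForms.
Variables (t : alg R n -> R) (t_lin : is_linear_form t).

Lemma linear_formE a v : t (a, v) = a * t f1 + t (0, v).
Proof.
have [tD tZ] := t_lin.
have -> : (a, v) = gadd (gscale a f1) (0, v).
  by rewrite /gadd /gscale /= mulr1 addr0 scaler0 add0r.
by rewrite tD tZ.
Qed.

Lemma linear_formZ b v : t (0, b *: v) = b * t (0, v).
Proof.
have -> : ((0 : R), b *: v) = gscale b (0, v) by rewrite /gscale /= mulr0.
by rewrite t_lin.2.
Qed.

Lemma linear_formN v : t (0, - v) = - t (0, v).
Proof. by rewrite -scaleN1r linear_formZ mulN1r. Qed.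

End LinearForms.

Lemma two_form_skew (w : alg R n -> alg R n -> R) x y :
  is_2form w -> w x y = - w y x.
Proof.
move=> [wl [wr wa]]; apply/eqP; rewrite -addr_eq0.
have := wa (gadd x y).
by rewrite (wr _).1 (wl x).1 (wl y).1 !wa add0r addr0 => ->.
Qed.

Section Bracket.
Variable M : 'M[R]_n.

Lemma gbracket_u a u v : gbracket M (a, u) (0, v) = (0, a *: (M *m v)).
Proof. by rewrite /gbracket /= scale0r subr0. Qed.

Lemma gbracket_f1 a u : gbracket M (a, u) f1 = (0, - (M *m u)).
Proof. by rewrite /gbracket /= mulmx0 scaler0 scale1r sub0r. Qed.

Lemma closed_1form_u t v :
  M \in unitmx -> closed_1form M t -> t (0, v) = 0.
Proof.
move=> Mu tc; have := tc f1 (0, invmx M *m v).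
by rewrite gbracket_u scale1r mulmxA mulmxV // mul1mx.
Qed.

Lemma closed_1form_f1_neq0 t :
  M \in unitmx -> is_linear_form t -> closed_1form M t ->
  (exists x, t x <> 0) -> t f1 != 0.
Proof.
move=> Mu tl tc [[b v] tx]; apply/eqP=> t1; apply: tx.
by rewrite linear_formE // t1 closed_1form_u // mulr0 addr0.
Qed.

Section TwoForm.
Variables (w : alg R n -> alg R n -> R) (w2 : is_2form w).

Lemma dw_wedge_f1_u t v v' :
  (forall v, t (0, v) = 0) ->
  (forall x y z, d2 M w x y z = wedge12 t w x y z) ->
  t f1 * w (0, v) (0, v') = - (w (0, M *m v) (0, v') + w (0, v) (0, M *m v')).
Proof.
move=> tu dw; have := dw f1 (0, v) (0, v').
rewrite /d2 /wedge12 !gbracket_u gbracket_f1 scale1r !tu !mul0r !addr0 => <-.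
rewrite (linear_formZ (w2.2.1 f1)) mul0r addr0.
by rewrite (linear_formN (w2.2.1 _)) [w (0, v) _](two_form_skew _ _ w2).
Qed.

Lemma g_omega_u a u v v' : g_omega M w (a, u) ->
  a * (w (0, M *m v) (0, v') + w (0, v) (0, M *m v')) = 0.
Proof.
move=> gx; have := gx (0, v) (0, v').
by rewrite !gbracket_u (linear_formZ (w2.2.1 _)) (linear_formZ (w2.1 _)) mulrDr.
Qed.

Lemma g_omega_f1 a u v : g_omega M w (a, u) ->
  (forall v v', w (0, v) (0, v') = 0) -> a * w f1 (0, M *m v) = 0.
Proof.
move=> gx wu; have := gx f1 (0, v).
by rewrite gbracket_f1 gbracket_u wu add0r (linear_formZ (w2.1 _)).
Qed.

End TwoForm.

Lemma lcs_g_omega_sub_u w t x : is_LCS M w t -> M \in unitmx ->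
  g_omega M w x -> x.1 = 0.
Proof.
move=> [w2 [nd [tl [tc [tnz dw]]]]] Mu; case: x => a u /= gx.
apply/eqP; apply: contraT => a0.
have tu v : t (0, v) = 0 := closed_1form_u v Mu tc.
have t1 : t f1 != 0 := closed_1form_f1_neq0 Mu tl tc tnz.
have u_isotropic v v' : w (0, v) (0, v') = 0.
  have /eqP := g_omega_u w2 v v' gx; rewrite mulf_eq0 (negPf a0) /= => /eqP M_skew.
  have /eqP := dw_wedge_f1_u w2 v v' tu dw.
  by rewrite M_skew oppr0 mulf_eq0 (negPf t1) => /eqP.
have f1_ker v : w f1 (0, v) = 0.
  have := g_omega_f1 w2 (invmx M *m v) gx u_isotropic.
  by rewrite mulmxA mulmxV // mul1mx => /eqP; rewrite mulf_eq0 (negPf a0) => /eqP.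
have : f1 = gzero R n.
  by apply: nd => -[b v]; rewrite (linear_formE (w2.1 _)) f1_ker w2.2.2 mulr0 addr0.
by case=> /eqP; rewrite oner_eq0.
Qed.

End Bracket.
End AlmostAbelianLCS.

Theorem lemma4p7 (R : realType) (n : nat) (M : 'M[R]_n)
  (w : alg R n -> alg R n -> R) (t : alg R n -> R) :
  is_LCS M w t -> M \in unitmx -> second_kind M w t.
Proof.
move=> lcs Mu [a u] gx.
have [_ [_ [tl [tc _]]]] := lcs.
have /= a0 := lcs_g_omega_sub_u lcs Mu gx.
by rewrite linear_formE // a0 mul0r (closed_1form_u _ Mu tc) addr0.
Qed.
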